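(* Let $0<\beta_1<\beta_2$. There is a unique $a=a(\beta_1,\beta_2)\in(0,1/\beta_1)$ satisfying $$a\beta_1-1+(a\beta_2+1)e^{-a(\beta_1+\beta_2)}=0.$$ Moreover, $\lim_{\beta_1/\beta_2\to0} a(\beta_1,\beta_2)\,\beta_1=1$. *)

From Stdlib Require Import Reals.
Open Scope R_scope.

Definition lemma_eq (b1 b2 a : R) : R :=
  a * b1 - 1 + (a * b2 + 1) * exp (- (a * (b1 + b2))).

From Stdlib Require Import Reals Lra.
From Coquelicot Require Import Coquelicot.
Open Scope R_scope.

(* Multiplying the equation by [- exp (a (b1 + b2))] turns it into [g a = 0]
   with [g a = (1 - a b1) exp (a (b1 + b2)) - a b2 - 1].  Then [g 0 = g' 0 = 0]
   and [g'' a = (b1 + b2) exp (a (b1 + b2)) (b2 - b1 - (b1 + b2) b1 a)] changes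
   sign exactly once, at the inflection point [a1 = (b2 - b1) / ((b1 + b2) b1)].
   Hence [g > 0] on [(0, a1]], and as [g (1/b1) < 0] there is a root in
   [(a1, 1/b1)]; by Rolle's theorem applied twice there is at most one positive
   root.  Finally every root exceeds [a1], so
   [1 - a b1 < 1 - a1 b1 = 2 b1 / (b1 + b2) < 2 b1 / b2]. *)

Section MeanValue.

Variables f f' : R -> R.
Hypothesis f_deriv : forall c, derivable_pt_lim f c (f' c).

Lemma derive_root_between x y :
  x < y -> f x = f y -> exists c, x < c < y /\ f' c = 0.
Proof.
  intros xy fxy.
  destruct (MVT_cor2 f f' x y xy) as [c [E cxy]]; [intros; apply f_deriv|].
  exists c; split; [exact cxy|].
  rewrite fxy, Rminus_diag in E.
  apply (Rmult_eq_reg_r (y - x)); lra.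
Qed.

Lemma pos_of_derive_pos x :
  f 0 = 0 -> 0 < x -> (forall c, 0 < c < x -> 0 < f' c) -> 0 < f x.
Proof.
  intros f0 x0 f'_pos.
  destruct (MVT_cor2 f f' 0 x x0) as [c [E c0x]]; [intros; apply f_deriv|].
  specialize (f'_pos c c0x); nra.
Qed.

End MeanValue.

Lemma flat_start_pos_root_unique f f' f'' :
  (forall c, derivable_pt_lim f c (f' c)) ->
  (forall c, derivable_pt_lim f' c (f'' c)) ->
  f 0 = 0 -> f' 0 = 0 ->
  (forall d1 d2, 0 < d1 -> 0 < d2 -> f'' d1 = 0 -> f'' d2 = 0 -> d1 = d2) ->
  forall z y, 0 < z -> 0 < y -> f z = 0 -> f y = 0 -> z = y.
Proof.
  intros f_deriv f'_deriv f0 f'0 f''_root_unique.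
  assert (no_two_roots : forall z y, 0 < z < y -> f z = 0 -> f y = 0 -> False).
  { intros z y [z0 zy] fz fy.
    destruct (derive_root_between f f' f_deriv 0 z z0 (eq_trans f0 (eq_sym fz)))
      as [c1 [c1_in f'c1]].
    destruct (derive_root_between f f' f_deriv z y zy (eq_trans fz (eq_sym fy)))
      as [c2 [c2_in f'c2]].
    destruct (derive_root_between f' f'' f'_deriv 0 c1 ltac:(lra)
                (eq_trans f'0 (eq_sym f'c1))) as [d1 [d1_in f''d1]].
    destruct (derive_root_between f' f'' f'_deriv c1 c2 ltac:(lra)
                (eq_trans f'c1 (eq_sym f'c2))) as [d2 [d2_in f''d2]].
    assert (d1 = d2) by (apply f''_root_unique; lra).
    lra. }
  intros z y z0 y0 fz fy.
  destruct (Rtotal_order z y) as [zy|[zy|yz]]; [exfalso | exact zy | exfalso].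
  - exact (no_two_roots z y (conj z0 zy) fz fy).
  - exact (no_two_roots y z (conj y0 yz) fy fz).
Qed.

Section Equation.

Variables b1 b2 : R.
Hypothesis b1_pos : 0 < b1.
Hypothesis b1_lt_b2 : b1 < b2.

Definition g a := (1 - a * b1) * exp (a * (b1 + b2)) - a * b2 - 1.
Definition g' a := exp (a * (b1 + b2)) * (b2 - (b1 + b2) * b1 * a) - b2.
Definition g'' a := (b1 + b2) * exp (a * (b1 + b2)) * (b2 - b1 - (b1 + b2) * b1 * a).
Definition inflection := (b2 - b1) / ((b1 + b2) * b1).

Lemma g_deriv a : derivable_pt_lim g a (g' a).
Proof. apply is_derive_Reals; unfold g, g'; auto_derive; [auto | ring]. Qed.

Lemma g'_deriv a : derivable_pt_lim g' a (g'' a).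
Proof. apply is_derive_Reals; unfold g', g''; auto_derive; [auto | ring]. Qed.

Lemma g0 : g 0 = 0.
Proof. unfold g; rewrite !Rmult_0_l, exp_0; ring. Qed.

Lemma g'0 : g' 0 = 0.
Proof. unfold g'; rewrite !Rmult_0_l, exp_0; ring. Qed.

Lemma lemma_eq_g a : lemma_eq b1 b2 a = 0 <-> g a = 0.
Proof.
  assert (e_pos := exp_pos (a * (b1 + b2))).
  assert (g_lemma_eq : g a = - exp (a * (b1 + b2)) * lemma_eq b1 b2 a).
  { unfold g, lemma_eq; rewrite exp_Ropp; field; lra. }
  rewrite g_lemma_eq; split; intros E.
  - rewrite E; ring.
  - destruct (Rmult_integral _ _ E); lra.
Qed.

Lemma inflection_pos : 0 < inflection.
Proof. unfold inflection; apply Rdiv_lt_0_compat; nra. Qed.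

Lemma inflection_lt_inv_b1 : inflection < 1 / b1.
Proof.
  unfold inflection; apply (Rmult_lt_reg_r ((b1 + b2) * b1)); [nra|].
  field_simplify; lra.
Qed.

Lemma g''_pos a : a < inflection -> 0 < g'' a.
Proof.
  intros a_lt; unfold inflection in a_lt.
  assert (a * ((b1 + b2) * b1) < b2 - b1).
  { apply (Rmult_lt_compat_r ((b1 + b2) * b1)) in a_lt; [|nra].
    field_simplify in a_lt; lra. }
  unfold g''; apply Rmult_lt_0_compat; [|nra].
  apply Rmult_lt_0_compat; [lra | apply exp_pos].
Qed.

Lemma g''_root a : g'' a = 0 -> a = inflection.
Proof.
  intros E; unfold g'' in E; unfold inflection.
  assert (e_pos := exp_pos (a * (b1 + b2))).
  destruct (Rmult_integral _ _ E) as [E'|E'].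
  - destruct (Rmult_integral _ _ E'); lra.
  - field_simplify_eq; lra.
Qed.

Lemma g_pos a : 0 < a <= inflection -> 0 < g a.
Proof.
  intros [a0 a_le].
  apply (pos_of_derive_pos g g' g_deriv a g0 a0); intros c [c0 c_lt].
  apply (pos_of_derive_pos g' g'' g'_deriv c g'0 c0); intros d [d0 d_lt].
  apply g''_pos; lra.
Qed.

Lemma g_inv_b1_neg : g (1 / b1) < 0.
Proof.
  unfold g; replace (1 - 1 / b1 * b1) with 0 by (field; lra).
  assert (0 < 1 / b1 * b2) by (apply Rmult_lt_0_compat; [apply Rdiv_lt_0_compat|]; lra).
  lra.
Qed.

Lemma g_root_exists : exists a, inflection < a < 1 / b1 /\ g a = 0.
Proof.
  assert (g_cont : continuity (fun a => - g a)).
  { intros x; apply derivable_continuous_pt; exists (- g' x).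
    apply (derivable_pt_lim_opp g), g_deriv. }
  assert (g_infl := g_pos inflection (conj inflection_pos (Rle_refl _))).
  assert (g_end := g_inv_b1_neg).
  destruct (IVT (fun a => - g a) inflection (1 / b1) g_cont inflection_lt_inv_b1)
    as [a [[a_ge a_le] ga]]; [lra | lra |].
  assert (a <> inflection) by (intros ->; lra).
  assert (a <> 1 / b1) by (intros ->; lra).
  exists a; repeat split; lra.
Qed.

Lemma g_pos_root_unique z y : 0 < z -> 0 < y -> g z = 0 -> g y = 0 -> z = y.
Proof.
  apply (flat_start_pos_root_unique g g' g'' g_deriv g'_deriv g0 g'0).
  intros d1 d2 _ _ E1 E2; rewrite (g''_root d1 E1), (g''_root d2 E2); reflexivity.
Qed.

Lemma g_root_gt_inflection a : 0 < a -> g a = 0 -> inflection < a.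
Proof.
  intros a0 ga; destruct (Rlt_or_le inflection a) as [|a_le]; [assumption|].
  generalize (g_pos a (conj a0 a_le)); lra.
Qed.

Lemma g_root_defect_lt a : 0 < a -> a < 1 / b1 -> g a = 0 ->
  0 < 1 - a * b1 < 2 * (b1 / b2).
Proof.
  intros a0 a_lt ga.
  assert (a_gt := g_root_gt_inflection a a0 ga); unfold inflection in a_gt.
  split.
  - apply (Rmult_lt_compat_r b1) in a_lt; [|lra].
    field_simplify in a_lt; lra.
  - apply (Rmult_lt_compat_r ((b1 + b2) * b1)) in a_gt; [|nra].
    field_simplify in a_gt; [|nra].
    apply (Rmult_lt_reg_r b2); [lra|].
    field_simplify; [nra | lra].
Qed.

End Equation.

Theorem lemma2p2 :
  (forall b1 b2 : R, 0 < b1 -> b1 < b2 ->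
     exists! a : R, (0 < a /\ a < 1 / b1) /\ lemma_eq b1 b2 a = 0)
  /\
  (forall eps : R, 0 < eps ->
     exists delta : R, 0 < delta /\
       forall b1 b2 a : R, 0 < b1 -> b1 < b2 -> b1 / b2 < delta ->
         0 < a -> a < 1 / b1 -> lemma_eq b1 b2 a = 0 ->
         Rabs (a * b1 - 1) < eps).
Proof.
  split.
  - intros b1 b2 b1_pos b1_lt_b2.
    destruct (g_root_exists b1 b2 b1_pos b1_lt_b2) as [a [a_in ga]].
    assert (infl_pos := inflection_pos b1 b2 b1_pos b1_lt_b2).
    exists a; split.
    + split; [lra | apply lemma_eq_g; assumption].
    + intros y [[y0 _] gy]; apply lemma_eq_g in gy.
      apply (g_pos_root_unique b1 b2 b1_pos b1_lt_b2); [lra | lra | exact ga | exact gy].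
  - intros eps eps_pos; exists (eps / 2); split; [lra|].
    intros b1 b2 a b1_pos b1_lt_b2 ratio_lt a0 a_lt ga.
    apply lemma_eq_g in ga.
    destruct (g_root_defect_lt b1 b2 b1_pos b1_lt_b2 a a0 a_lt ga).
    rewrite Rabs_minus_sym, Rabs_pos_eq; lra.
Qed.
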